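(* Let $d:\mathcal{A}\to A$ be any derivation. Then $d(\mathcal{A}\cap\mathcal{K})\subseteq\mathcal{K}$. Consequently $d$ induces a derivation $[d]:[\mathcal{A}]\to A/\mathcal{K}\cong C(S^1)\oplus C(S^1)$, $[d]([a])=[d(a)]$.
   Context: Let $\{E_k\}$ be the canonical basis of $\ell^2(\mathbb{Z})$, $UE_k=E_{k+1}$, $\mathbb{K}E_k=kE_k$, $a(\mathbb{K})E_k=a(k)E_k$. $c(\mathbb{Z})$ is the set of $a:\mathbb{Z}\to\mathbb{C}$ with limits $a(\pm\infty)$ at $\pm\infty$; $A$ is the C$^*$-algebra generated by $U$ and all $a(\mathbb{K})$, $a\in c(\mathbb{Z})$. $\mathcal{A}$ is the algebra of finite sums $\sum_nU^na_n(\mathbb{K})$ with each $a_n$ eventually constant (constant on $k\ge k_0$ and on $k\le-k_0$ for some $k_0$). $\mathcal{K}$ is the ideal of compact operators on $\ell^2(\mathbb{Z})$; it is contained in $A$ and $A/\mathcal{K}\cong C(S^1)\oplus C(S^1)$ via $\sigma=(\sigma_+,\sigma_-)$, $\sigma_\pm(U)=e^{ix}$, $\sigma_\pm(a(\mathbb{K}))=a(\pm\infty)$; $[\mathcal{A}]$ denotes the image of $\mathcal{A}$. A derivation is a linear map satisfying the Leibniz rule. *)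

From HB Require Import structures.
From mathcomp Require Import all_boot all_order all_algebra.
From mathcomp Require Import all_classical all_reals.
From mathcomp Require Import complex.
Import ComplexField Normc.

Set Implicit Arguments.
Unset Strict Implicit.
Unset Printing Implicit Defensive.

Import Order.TTheory GRing.Theory Num.Theory.
Local Open Scope ring_scope.
Local Open Scope classical_set_scope.

(* Operators are
   maps (int -> R[i]) -> (int -> R[i]); only their behaviour on l^2(Z)
   matters, and operators are compared with [opeq] (equality on l^2). *)

Section L2Z.
Variable R : realType.

Definition vec := int -> R[i].
Definition op := vec -> vec.

Definition cabs2 (z : R[i]) : R := normc z ^+ 2.
Definition conjc (z : R[i]) : R[i] := Complex (complex.Re z) (- complex.Im z).

(* partial sums of |x_k|^2 over -n <= k < n *)
Definition sqn (x : vec) (n : nat) : R :=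
  \sum_(i < n.*2) cabs2 (x (i%:Z - n%:Z)).

Definition l2 (x : vec) : Prop := exists M : R, forall n, sqn x n <= M.

(* squared l^2 norm *)
Definition nrm2 (x : vec) : R := sup (range (sqn x)).

Definition vadd (x y : vec) : vec := fun k => x k + y k.
Definition vscale (c : R[i]) (x : vec) : vec := fun k => c * x k.
Definition vsub (x y : vec) : vec := fun k => x k - y k.

Definition oadd (S T : op) : op := fun x => vadd (S x) (T x).
Definition osub (S T : op) : op := fun x => vsub (S x) (T x).
Definition oscale (c : R[i]) (T : op) : op := fun x => vscale c (T x).
Definition ocomp (S T : op) : op := fun x => S (T x).

Definition opeq (S T : op) : Prop := forall x, l2 x -> S x = T x.

Definition bounded (T : op) : Prop :=
  [/\ (forall x, l2 x -> l2 (T x)),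
      (forall x y, l2 x -> l2 y -> T (vadd x y) = vadd (T x) (T y)),
      (forall c x, l2 x -> T (vscale c x) = vscale c (T x)) &
      exists M : R, forall x, l2 x -> nrm2 (T x) <= M * nrm2 x].

(* squared operator norm *)
Definition opnorm2 (T : op) : R :=
  sup [set nrm2 (T x) | x in [set x | l2 x /\ nrm2 x <= 1]].

Definition E (j : int) : vec := fun k => if k == j then 1 else 0.

(* S is the adjoint of T:  <E_i, S E_j> = <T E_i, E_j> *)
Definition adjoint_of (S T : op) : Prop :=
  forall i j, S (E j) i = conjc (T (E i) j).

(* compact operator: bounded, and the image of every sequence in the unit
   ball has a Cauchy (hence, l^2 being complete, convergent) subsequence *)
Definition compact (T : op) : Prop :=
  bounded T /\
  forall x : nat -> vec, (forall n, l2 (x n) /\ nrm2 (x n) <= 1) ->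
  exists phi : nat -> nat, (forall n, (phi n < phi n.+1)%N) /\
    forall e : R, 0 < e -> exists N : nat, forall m n : nat,
      (N <= m)%N -> (N <= n)%N ->
      nrm2 (vsub (T (x (phi m))) (T (x (phi n)))) < e.

(* U E_k = E_{k+1}, i.e. (U x)_k = x_{k-1} *)
Definition shiftU : op := fun x k => x (k - 1).
(* a(K) E_k = a(k) E_k *)
Definition multK (a : int -> R[i]) : op := fun x k => a k * x k.

Definition cZ (a : int -> R[i]) : Prop :=
  exists lp lm : R[i],
    (forall e : R, 0 < e -> exists N : int, forall k, N <= k -> normc (a k - lp) < e) /\
    (forall e : R, 0 < e -> exists N : int, forall k, k <= - N -> normc (a k - lm) < e).

Definition ev_const (a : int -> R[i]) : Prop :=
  exists k0 : int, forall k,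
    (k0 <= k -> a k = a k0) /\ (k <= - k0 -> a k = a (- k0)).

Definition cstar_closed (S : op -> Prop) : Prop :=
  (forall T, S T -> bounded T) /\
  (forall T1 T2, S T1 -> S T2 -> S (oadd T1 T2)) /\
  (forall c T, S T -> S (oscale c T)) /\
  (forall T1 T2, S T1 -> S T2 -> S (ocomp T1 T2)) /\
  (forall T T', S T -> bounded T' -> adjoint_of T' T -> S T') /\
  (forall T, bounded T ->
     (forall e : R, 0 < e -> exists T', S T' /\ opnorm2 (osub T T') < e) ->
     S T).

(* A : the C*-algebra generated by U and all a(K), a in c(Z) *)
Definition Acal (T : op) : Prop :=
  forall S : op -> Prop, cstar_closed S -> S shiftU ->
    (forall a, cZ a -> S (multK a)) -> S T.

(* calA : finite sums  sum_n U^n a_n(K)  with a_n eventually constant;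
   (U^n a(K) x)_k = a(k-n) x_(k-n) *)
Definition Aalg (T : op) : Prop :=
  exists (m : nat) (ns : 'I_m -> int) (as_ : 'I_m -> int -> R[i]),
    (forall i, ev_const (as_ i)) /\
    opeq T (fun x k => \sum_(i < m) as_ i (k - ns i) * x (k - ns i)).

Definition Kcal (T : op) : Prop := compact T.

Definition derivation (d : op -> op) : Prop :=
  [/\ (forall a, Aalg a -> Acal (d a)),
      (forall a b, Aalg a -> Aalg b -> opeq a b -> opeq (d a) (d b)),
      (forall a b, Aalg a -> Aalg b -> opeq (d (oadd a b)) (oadd (d a) (d b))),
      (forall c a, Aalg a -> opeq (d (oscale c a)) (oscale c (d a))) &
      (forall a b, Aalg a -> Aalg b ->
         opeq (d (ocomp a b)) (oadd (ocomp a (d b)) (ocomp (d a) b)))].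

End L2Z.

(* A compact element a = sum_n U^n a_n(K) of calA is supported in a finite
   window.  Indeed, if c_n^+ is the value of a_n near +oo, then for large j
   the vector a E_j is the translate by j of the coefficient sequence of the
   Laurent polynomial sum_n c_n^+ U^n.  Compactness forces a E_j to have a
   Cauchy subsequence along a widely separated sequence of j's, which is only
   possible if that Laurent polynomial vanishes; likewise at -oo.  Hence
   a = P a = a P for the orthogonal projection P onto finitely many E_k.
   Since every element of A is bounded, the Leibniz rule gives
   d a = d (P a) = P d(a) + d(P) a P, a sum of two finite-rank operators.
   The second claim follows by linearity of d. *)

From HB Require Import structures.
From mathcomp Require Import all_boot all_order all_algebra.
From mathcomp Require Import all_classical all_reals.
From mathcomp Require Import complex.
From mathcomp Require Import topology normedtype sequences.
From mathcomp Require Import zify ring lra.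
Import ComplexField Normc.
Import numFieldNormedType.Exports.

Set Implicit Arguments.
Unset Strict Implicit.
Unset Printing Implicit Defensive.

Import Order.TTheory GRing.Theory Num.Theory.
Local Open Scope ring_scope.
Local Open Scope classical_set_scope.

Section ShiftAlgebra.
Variable R : realType.
Implicit Types (x y : vec R) (T : op R) (z w : R[i]).

(** * The space l^2(Z) *)

Lemma normc_ge0 z : 0 <= normc z.
Proof. by case: z => a b; rewrite /normc sqrtr_ge0. Qed.

Lemma cabs2_ge0 z : 0 <= cabs2 z.
Proof. by rewrite /cabs2 sqr_ge0. Qed.

Lemma cabs20 : cabs2 (0 : R[i]) = 0.
Proof. by rewrite /cabs2 normc0 expr0n. Qed.

Lemma cabs21 : cabs2 (1 : R[i]) = 1.
Proof. by rewrite /cabs2 normc1 expr1n. Qed.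

Lemma cabs2M z w : cabs2 (z * w) = cabs2 z * cabs2 w.
Proof. by rewrite /cabs2 normcM exprMn. Qed.

Lemma cabs2N z : cabs2 (- z) = cabs2 z.
Proof. by rewrite /cabs2 normcN. Qed.

Lemma cabs2D z w : cabs2 (z + w) <= 2 * cabs2 z + 2 * cabs2 w.
Proof.
have := le_normcD z w; have := normc_ge0 z; have := normc_ge0 w.
have := normc_ge0 (z + w); have := sqr_ge0 (normc z - normc w).
rewrite /cabs2; nra.
Qed.

Lemma cabs2B z w : cabs2 (z - w) <= 2 * cabs2 z + 2 * cabs2 w.
Proof. by rewrite -(cabs2N w) cabs2D. Qed.

Lemma cabs2_eq0 z : cabs2 z = 0 -> z = 0.
Proof. by move=> /eqP; rewrite /cabs2 sqrf_eq0 => /eqP /eq0_normc. Qed.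

Lemma cabs2E z : cabs2 z = complex.Re z ^+ 2 + complex.Im z ^+ 2.
Proof. by case: z => a b; rewrite /cabs2 /normc /= sqr_sqrtr // addr_ge0 // sqr_ge0. Qed.

Lemma sqn_ge0 x n : 0 <= sqn x n.
Proof. by rewrite /sqn sumr_ge0 // => i _; exact: cabs2_ge0. Qed.

Lemma sqn_le_nrm2 x n : l2 x -> sqn x n <= nrm2 x.
Proof.
move=> [M HM]; apply: ub_le_sup; last by exists n.
by exists M => _ [k _ <-].
Qed.

Lemma nrm2_le x M : (forall n, sqn x n <= M) -> nrm2 x <= M.
Proof. by move=> H; apply: ge_sup; [exists (sqn x 0); exists 0|move=> _ [k _ <-]]. Qed.

Lemma nrm2_ge0 x : l2 x -> 0 <= nrm2 x.
Proof. by move=> h; apply: le_trans (sqn_le_nrm2 0 h); exact: sqn_ge0. Qed.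

Lemma cabs2_le_sqn x n (k : int) : - (n%:Z) <= k < n%:Z -> cabs2 (x k) <= sqn x n.
Proof.
move=> hk; have hi : (absz (k + n%:Z)%R < n.*2)%N by lia.
rewrite /sqn (bigD1 (Ordinal hi)) //= -[X in X <= _]addr0 lerD ?sumr_ge0 //.
  by rewrite le_eqVlt; apply/orP; left; apply/eqP; congr (cabs2 (x _)); lia.
by move=> i _; exact: cabs2_ge0.
Qed.

Lemma cabs2_le_nrm2 x k : l2 x -> cabs2 (x k) <= nrm2 x.
Proof. by move=> h; apply: le_trans (sqn_le_nrm2 (absz k).+1 h); apply: cabs2_le_sqn; lia. Qed.

Lemma sqn_add x y n : sqn (vadd x y) n <= 2 * sqn x n + 2 * sqn y n.
Proof. by rewrite /sqn !mulr_sumr -big_split /=; apply: ler_sum => i _; exact: cabs2D. Qed.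

Lemma sqn_sub x y n : sqn (vsub x y) n <= 2 * sqn x n + 2 * sqn y n.
Proof. by rewrite /sqn !mulr_sumr -big_split /=; apply: ler_sum => i _; exact: cabs2B. Qed.

Lemma sqn_scale c x n : sqn (vscale c x) n = cabs2 c * sqn x n.
Proof. by rewrite /sqn mulr_sumr; apply: eq_bigr => i _; rewrite cabs2M. Qed.

Lemma l2_add x y : l2 x -> l2 y -> l2 (vadd x y).
Proof.
move=> hx hy; exists (2 * nrm2 x + 2 * nrm2 y) => n; apply: le_trans (sqn_add x y n) _.
by apply: lerD; apply: ler_wpM2l => //; exact: sqn_le_nrm2.
Qed.

Lemma l2_sub x y : l2 x -> l2 y -> l2 (vsub x y).
Proof.
move=> hx hy; exists (2 * nrm2 x + 2 * nrm2 y) => n; apply: le_trans (sqn_sub x y n) _.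
by apply: lerD; apply: ler_wpM2l => //; exact: sqn_le_nrm2.
Qed.

Lemma l2_scale c x : l2 x -> l2 (vscale c x).
Proof.
move=> hx; exists (cabs2 c * nrm2 x) => n; rewrite sqn_scale.
by apply: ler_wpM2l; [exact: cabs2_ge0|exact: sqn_le_nrm2].
Qed.

Lemma nrm2_add x y : l2 x -> l2 y -> nrm2 (vadd x y) <= 2 * nrm2 x + 2 * nrm2 y.
Proof.
move=> hx hy; apply: nrm2_le => n; apply: le_trans (sqn_add x y n) _.
by apply: lerD; apply: ler_wpM2l => //; exact: sqn_le_nrm2.
Qed.

Lemma nrm2_scale c x : l2 x -> nrm2 (vscale c x) <= cabs2 c * nrm2 x.
Proof.
move=> hx; apply: nrm2_le => n; rewrite sqn_scale.
by apply: ler_wpM2l; [exact: cabs2_ge0|exact: sqn_le_nrm2].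
Qed.

Definition vzero : vec R := fun _ => 0.

Lemma sqn_vzero n : sqn vzero n = 0.
Proof. by rewrite /sqn big1 // => i _; rewrite /vzero cabs20. Qed.

Lemma l2_vzero : l2 vzero.
Proof. by exists 0 => n; rewrite sqn_vzero. Qed.

Lemma nrm2_vzero : nrm2 vzero <= 0.
Proof. by apply: nrm2_le => n; rewrite sqn_vzero. Qed.

Lemma sqn_E j n : sqn (@E R j) n <= 1.
Proof.
rewrite /sqn; case: (boolP [exists i : 'I_(n.*2), (i%:Z - n%:Z) == j]).
  move=> /existsP [i0 /eqP hi0]; rewrite (bigD1 i0) //= big1.
    by rewrite addr0 /E hi0 eqxx cabs21.
  move=> i hi; rewrite /E; case: eqP => h; last by rewrite cabs20.
  by exfalso; move: hi => /eqP; apply; apply: val_inj => /=; lia.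
move=> /existsPn hn; rewrite big1 // => i _; rewrite /E.
by move: (hn i) => /negbTE ->; rewrite cabs20.
Qed.

Lemma l2_E j : l2 (@E R j).
Proof. by exists 1; exact: sqn_E. Qed.

Lemma nrm2_E j : nrm2 (@E R j) <= 1.
Proof. by apply: nrm2_le; exact: sqn_E. Qed.

Definition vsum (N : nat) (F : nat -> vec R) : vec R := fun k => \sum_(s < N) F s k.

Lemma vsumS N F : vsum N.+1 F = vadd (vsum N F) (F N).
Proof. by apply/funext => k; rewrite /vsum /vadd big_ord_recr. Qed.

Lemma l2_vsum N F : (forall s, l2 (F s)) -> l2 (vsum N F).
Proof.
move=> hF; elim: N => [|N IH]; last by rewrite vsumS; exact: l2_add.
have -> : vsum 0 F = vzero by apply/funext => k; rewrite /vsum big_ord0.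
exact: l2_vzero.
Qed.

(** * Bounded operators *)

Lemma boundedP T : bounded T ->
  exists2 M, 0 <= M & forall x, l2 x -> nrm2 (T x) <= M * nrm2 x.
Proof.
move=> [_ _ _ [M hM]]; exists `|M| => // x hx; apply: le_trans (hM _ hx) _.
by apply: ler_wpM2r; [exact: nrm2_ge0| exact: ler_norm].
Qed.

Lemma bounded_add T1 T2 : bounded T1 -> bounded T2 -> bounded (oadd T1 T2).
Proof.
move=> [l1 a1 s1 [M1 h1]] [l2' a2 s2 [M2 h2]]; split.
- by move=> x hx; apply: l2_add; auto.
- move=> x y hx hy; rewrite /oadd a1 // a2 //; apply/funext => k /=.
  by rewrite /vadd; ring.
- move=> c x hx; rewrite /oadd s1 // s2 //; apply/funext => k /=.
  by rewrite /vadd /vscale; ring.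
- exists (2 * M1 + 2 * M2) => x hx.
  apply: le_trans (nrm2_add (l1 _ hx) (l2' _ hx)) _.
  have := h1 _ hx; have := h2 _ hx; nra.
Qed.

Lemma bounded_scale c T : bounded T -> bounded (oscale c T).
Proof.
move=> [l1 a1 s1 [M1 h1]]; split.
- by move=> x hx; apply: l2_scale; auto.
- move=> x y hx hy; rewrite /oscale a1 //; apply/funext => k /=.
  by rewrite /vadd /vscale; ring.
- move=> c' x hx; rewrite /oscale s1 //; apply/funext => k /=.
  by rewrite /vscale; ring.
- exists (cabs2 c * M1) => x hx; apply: le_trans (nrm2_scale c (l1 _ hx)) _.
  by rewrite -mulrA; apply: ler_wpM2l; [exact: cabs2_ge0| auto].
Qed.

Lemma bounded_comp S T : bounded S -> bounded T -> bounded (ocomp S T).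
Proof.
move=> hS hT; have [MS MS0 hMS] := boundedP hS; have [MT MT0 hMT] := boundedP hT.
move: hS hT => [l1 a1 s1 _] [l2' a2 s2 _]; split.
- by move=> x hx; rewrite /ocomp; auto.
- by move=> x y hx hy; rewrite /ocomp a2 // a1 //; auto.
- by move=> c x hx; rewrite /ocomp s2 // s1 //; auto.
- exists (MS * MT) => x hx; apply: le_trans (hMS _ (l2' _ hx)) _.
  by rewrite -mulrA; apply: ler_wpM2l => //; auto.
Qed.

Lemma bounded_vsum T N F : bounded T -> (forall s, l2 (F s)) ->
  T (vsum N F) = vsum N (fun s => T (F s)).
Proof.
move=> [_ a1 s1 _] hF; elim: N => [|N IH].
  have -> : vsum 0 F = vscale 0 vzero.
    by apply/funext => k; rewrite /vsum big_ord0 /vscale mul0r.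
  rewrite s1; last exact: l2_vzero.
  by apply/funext => k; rewrite /vsum big_ord0 /vscale mul0r.
by rewrite !vsumS a1 ?IH //; exact: l2_vsum.
Qed.

Lemma bounded_shiftU : bounded (@shiftU R).
Proof.
have shift_sqn x n : sqn (shiftU x) n <= sqn x n.+1.
  rewrite /sqn /shiftU (@big_ord_widen _ _ _ n.*2 n.+1.*2
    (fun i : nat => cabs2 (x (i%:Z - n%:Z - 1)))) ?big_mkcond /=; last lia.
  apply: ler_sum => i _; case: ifP => hi; last exact: cabs2_ge0.
  by rewrite le_eqVlt; apply/orP; left; apply/eqP; congr (cabs2 (x _)); lia.
split => //.
- by move=> x [M hM]; exists M => n; apply: le_trans (shift_sqn x n) _.
- exists 1 => x hx; rewrite mul1r; apply: nrm2_le => n.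
  by apply: le_trans (shift_sqn x n) _; exact: sqn_le_nrm2.
Qed.

Lemma bounded_multK (a : int -> R[i]) B :
  (forall k, cabs2 (a k) <= B) -> bounded (multK a).
Proof.
move=> hB; have B0 : 0 <= B by apply: le_trans (cabs2_ge0 (a 0)) (hB 0).
have multK_sqn x n : sqn (multK a x) n <= B * sqn x n.
  rewrite /sqn mulr_sumr; apply: ler_sum => i _; rewrite /multK cabs2M.
  by apply: ler_wpM2r; [exact: cabs2_ge0|].
split.
- move=> x hx; exists (B * nrm2 x) => n; apply: le_trans (multK_sqn x n) _.
  by apply: ler_wpM2l => //; exact: sqn_le_nrm2.
- by move=> x y _ _; apply/funext => k; rewrite /multK /vadd mulrDr.
- by move=> c x _; apply/funext => k; rewrite /multK /vscale mulrCA.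
- exists B => x hx; apply: nrm2_le => n; apply: le_trans (multK_sqn x n) _.
  by apply: ler_wpM2l => //; exact: sqn_le_nrm2.
Qed.

Lemma cZ_cabs2_bounded (a : int -> R[i]) : cZ a -> exists B, forall k, cabs2 (a k) <= B.
Proof.
move=> [lp [lm [hp hm]]].
have [N1 hN1] := hp 1 ltr01; have [N2 hN2] := hm 1 ltr01.
have near_cabs2 l k : normc (a k - l) < 1 -> cabs2 (a k) <= 2 + 2 * cabs2 l.
  move=> h; have := cabs2D (a k - l) l; rewrite subrK.
  have : cabs2 (a k - l) < 1 by rewrite /cabs2; have := normc_ge0 (a k - l); nra.
  lra.
set K := (absz N1 + absz N2)%N.
exists ((2 + 2 * cabs2 lp) + (2 + 2 * cabs2 lm) + sqn a K) => k.
have := cabs2_ge0 lp; have := cabs2_ge0 lm; have := sqn_ge0 a K.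
have [hk|hk] := leP K%:Z k; first by have := near_cabs2 _ _ (hN1 k ltac:(lia)); lra.
have [hk'|hk'] := leP k (- K%:Z); first by have := near_cabs2 _ _ (hN2 k ltac:(lia)); lra.
by have := cabs2_le_sqn a (n := K) (k := k) ltac:(lia); lra.
Qed.

(* The adjoint and norm-limit clauses of [cstar_closed] presuppose boundedness. *)
Lemma cstar_closed_bounded : cstar_closed (@bounded R).
Proof.
split=> //; split; first exact: bounded_add.
split; first exact: bounded_scale.
by split; first exact: bounded_comp.
Qed.

Lemma Acal_bounded T : Acal T -> bounded T.
Proof.
apply; [exact: cstar_closed_bounded | exact: bounded_shiftU |].
by move=> a /cZ_cabs2_bounded [B hB]; exact: bounded_multK hB.
Qed.

(** * Compact operators *)

Lemma strict_incr_ge_id (phi : nat -> nat) :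
  (forall n, (phi n < phi n.+1)%N) -> forall n, (n <= phi n)%N.
Proof. by move=> hphi; elim => [|n IH] //; apply: leq_ltn_trans IH (hphi n). Qed.

Lemma cauchy_subseq_real (u : nat -> R) C : (forall n, `|u n| <= C) ->
  exists phi : nat -> nat, (forall n, (phi n < phi n.+1)%N) /\
   forall e : R, 0 < e -> exists N : nat, forall m n : nat, (N <= m)%N -> (N <= n)%N ->
     `|u (phi m) - u (phi n)| < e.
Proof.
move=> hC.
have hb : bounded_fun u.
  have PF := @globally_properfilter nat setT 0%N I.
  by rewrite /= ex_bound; exists C => n _; exact: hC.
have [f finc fc] := bolzano_weierstrass hb.
exists f; split.
  move=> n; rewrite ltnNge; apply/negP => h; have := finc n.+1 n.
  by rewrite !leEnat h ltnn.
move=> e e0; have /cvg_ex [l hl] := fc.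
have e20 : 0 < e / 2 by rewrite divr_gt0.
move/cvgrPdist_lt: hl => /(_ (e/2) e20) [N _ HN].
exists N => m n hm hn.
have h1 : `|l - u (f m)| < e / 2 := HN m hm.
have h2 : `|l - u (f n)| < e / 2 := HN n hn.
have := ler_distD l (u (f m)) (u (f n)).
rewrite (distrC (u (f m)) l); lra.
Qed.

Lemma cauchy_subseq_complex (z : nat -> R[i]) C : (forall n, cabs2 (z n) <= C) ->
  exists phi : nat -> nat, (forall n, (phi n < phi n.+1)%N) /\
   forall e : R, 0 < e -> exists N : nat, forall m n : nat, (N <= m)%N -> (N <= n)%N ->
     cabs2 (z (phi m) - z (phi n)) < e.
Proof.
move=> hC.
have C0 : 0 <= C by apply: le_trans (hC 0%N); exact: cabs2_ge0.
have bnd (r : R) : r ^+ 2 <= C -> `|r| <= 1 + C.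
  by move=> h; rewrite ler_norml; apply/andP; split; nra.
have hre n : complex.Re (z n) ^+ 2 <= C.
  by have := hC n; rewrite cabs2E; have := sqr_ge0 (complex.Im (z n)); nra.
have him n : complex.Im (z n) ^+ 2 <= C.
  by have := hC n; rewrite cabs2E; have := sqr_ge0 (complex.Re (z n)); nra.
have [p1 [i1 c1]] := cauchy_subseq_real (fun n => bnd _ (hre n)).
have [p2 [i2 c2]] := cauchy_subseq_real (fun n => bnd _ (him (p1 n))).
exists (p1 \o p2); split; first by move=> n; apply: (homo_ltn ltn_trans i1); exact: i2.
move=> e e0.
have small (r : R) : `|r| < Num.min 1 (e / 2) -> r ^+ 2 < e / 2.
  move=> h; rewrite -real_normK ?num_real //; move: h; rewrite lt_min => /andP [h1 h2].
  have := normr_ge0 r; nra.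
have d0 : 0 < Num.min 1 (e / 2) by rewrite lt_min ltr01 divr_gt0.
have [N1 h1] := c1 _ d0; have [N2 h2] := c2 _ d0.
exists (maxn N1 N2) => m n hm hn; rewrite cabs2E /=.
have := strict_incr_ge_id i2 m; have := strict_incr_ge_id i2 n => hn' hm'.
have := small _ (h1 (p2 m) (p2 n) ltac:(lia) ltac:(lia)).
have := small _ (h2 m n ltac:(lia) ltac:(lia)).
case: (z (p1 (p2 m))) (z (p1 (p2 n))) => a b [a' b'] /=; lra.
Qed.

Lemma Kcal_opeq T T' : Kcal T -> opeq T T' -> Kcal T'.
Proof.
move=> [[hl ha hs [M hM]] hc] he; split; first split.
- by move=> x hx; rewrite -he //; auto.
- by move=> x y hx hy; rewrite -!he //; [auto|exact: l2_add].
- by move=> c x hx; rewrite -!he //; [auto|exact: l2_scale].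
- by exists M => x hx; rewrite -he //; auto.
move=> x hx; have [phi [hphi hC]] := hc x hx; exists phi; split => // e e0.
have [N hN] := hC e e0; exists N => m n hm hn.
by rewrite -!he; [exact: hN| exact: (hx _).1| exact: (hx _).1].
Qed.

Lemma Kcal_add T1 T2 : Kcal T1 -> Kcal T2 -> Kcal (oadd T1 T2).
Proof.
move=> [b1 c1] [b2 c2]; split; first exact: bounded_add.
move=> x hx; have [p1 [i1 h1]] := c1 x hx.
have [p2 [i2 h2]] := c2 (fun n => x (p1 n)) (fun n => hx _).
exists (p1 \o p2); split; first by move=> n; apply: (homo_ltn ltn_trans i1); exact: i2.
move=> e e0; have e4 : 0 < e / 4 by rewrite divr_gt0.
have [N1 hN1] := h1 _ e4; have [N2 hN2] := h2 _ e4.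
exists (maxn N1 N2) => m n hm hn; rewrite /oadd /=.
set a := T1 _; set b := T2 _; set c := T1 _; set d := T2 _.
have -> : vsub (vadd a b) (vadd c d) = vadd (vsub a c) (vsub b d).
  by apply/funext => k; rewrite /vsub /vadd; ring.
have l2x k : l2 (x k) := (hx k).1.
case: b1 => [l1 _ _ _]; case: b2 => [l2' _ _ _].
apply: le_lt_trans (nrm2_add (l2_sub (l1 _ (l2x _)) (l1 _ (l2x _)))
                             (l2_sub (l2' _ (l2x _)) (l2' _ (l2x _)))) _.
have := strict_incr_ge_id i2 m; have := strict_incr_ge_id i2 n => hn' hm'.
have := hN1 (p2 m) (p2 n) ltac:(lia) ltac:(lia); have := hN2 m n ltac:(lia) ltac:(lia).
rewrite /a /b /c /d; lra.
Qed.

Lemma Kcal_zero : Kcal (fun _ : vec R => vzero).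
Proof.
split; first split.
- by move=> *; exact: l2_vzero.
- by move=> *; apply/funext => k; rewrite /vadd /vzero addr0.
- by move=> *; apply/funext => k; rewrite /vscale /vzero mulr0.
- by exists 0 => x _; rewrite mul0r; exact: nrm2_vzero.
move=> x hx; exists id; split => // e e0; exists 0%N => m n _ _.
have -> : vsub vzero vzero = vzero.
  by apply/funext => k; rewrite /vsub /vzero subrr.
exact: le_lt_trans nrm2_vzero e0.
Qed.

Lemma Kcal_rank_one (f : vec R -> R[i]) (w : vec R) C : l2 w ->
  (forall x y, l2 x -> l2 y -> f (vadd x y) = f x + f y) ->
  (forall c x, l2 x -> f (vscale c x) = c * f x) ->
  (forall x, l2 x -> cabs2 (f x) <= C * nrm2 x) ->
  Kcal (fun x => vscale (f x) w).
Proof.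
move=> hw fa fs fb; have nw0 := nrm2_ge0 hw.
split; first split.
- by move=> x hx; exact: l2_scale.
- by move=> x y hx hy; rewrite fa //; apply/funext => k; rewrite /vadd /vscale mulrDl.
- by move=> c x hx; rewrite fs //; apply/funext => k; rewrite /vscale mulrA.
- exists (C * nrm2 w) => x hx; apply: le_trans (nrm2_scale _ hw) _.
  by have := fb x hx; have := nrm2_ge0 hx; nra.
move=> x hx.
have hz n : cabs2 (f (x n)) <= `|C|.
  have := fb _ (hx n).1; have := (hx n).2; have := nrm2_ge0 (hx n).1.
  by have := ler_norm C; have := normr_ge0 C; nra.
have [phi [iphi hphi]] := cauchy_subseq_complex hz.
exists phi; split => // e e0.
have e'0 : 0 < e / (nrm2 w + 1) by rewrite divr_gt0 //; lra.
have ee : e / (nrm2 w + 1) * (nrm2 w + 1) = e by rewrite divfK // gt_eqF //; lra.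
have [N hN] := hphi _ e'0; exists N => m n hm hn.
have -> : vsub (vscale (f (x (phi m))) w) (vscale (f (x (phi n))) w) =
          vscale (f (x (phi m)) - f (x (phi n))) w.
  by apply/funext => k; rewrite /vsub /vscale mulrBl.
apply: le_lt_trans (nrm2_scale _ hw) _.
by have := hN m n hm hn; have := cabs2_ge0 (f (x (phi m)) - f (x (phi n))); nra.
Qed.

Lemma Kcal_finite_rank N (f : nat -> vec R -> R[i]) (w : nat -> vec R) C :
  (forall s, l2 (w s)) ->
  (forall s x y, l2 x -> l2 y -> f s (vadd x y) = f s x + f s y) ->
  (forall s c x, l2 x -> f s (vscale c x) = c * f s x) ->
  (forall s x, l2 x -> cabs2 (f s x) <= C * nrm2 x) ->
  Kcal (fun x => vsum N (fun s => vscale (f s x) (w s))).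
Proof.
move=> hw fa fs fb; elim: N => [|N IH].
  by apply: Kcal_opeq Kcal_zero _ => x _; apply/funext => k; rewrite /vsum big_ord0.
apply: Kcal_opeq (Kcal_add IH (Kcal_rank_one (hw N) (fa N) (fs N) (fb N))) _.
by move=> x _; rewrite vsumS.
Qed.

Definition window_ind (K : nat) : int -> R[i] :=
  fun k => if (- (K%:Z) <= k) && (k < K%:Z) then 1 else 0.

Definition window_proj (K : nat) : op R := multK (window_ind K).

Lemma bounded_window_proj K : bounded (window_proj K).
Proof.
by apply: (@bounded_multK _ 1) => k; rewrite /window_ind; case: ifP; rewrite ?cabs21 ?cabs20.
Qed.

Lemma sum_window_E (g : int -> R[i]) (K N : nat) k :
  \sum_(s < N) g (s%:Z - K%:Z) * @E R (s%:Z - K%:Z) k =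
  if (- (K%:Z) <= k) && (k < N%:Z - K%:Z) then g k else 0.
Proof.
elim: N => [|N IH]; first by rewrite big_ord0; case: ifP => //; lia.
rewrite big_ord_recr /= IH /E.
case: (boolP (k == N%:Z - K%:Z)) => /eqP h.
  rewrite mulr1 -h; case: ifP; first by lia.
  by case: ifP; [rewrite add0r | lia].
by rewrite mulr0 addr0; case: ifP => h1; case: ifP => h2 //; lia.
Qed.

Lemma window_proj_vsum K y : window_proj K y =
  vsum (K.*2) (fun s => vscale (y (s%:Z - K%:Z)) (@E R (s%:Z - K%:Z))).
Proof.
apply/funext => k; rewrite /window_proj /multK /vsum /vscale sum_window_E /window_ind.
have -> : (K.*2)%:Z - K%:Z = K%:Z by lia.
by case: ifP; rewrite ?mul1r ?mul0r.
Qed.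

Lemma Kcal_window_proj_comp K T : bounded T -> Kcal (ocomp (window_proj K) T).
Proof.
move=> hT; have [M M0 hM] := boundedP hT; move: hT => [l1 a1 s1 _].
apply: Kcal_opeq (@Kcal_finite_rank (K.*2) (fun s x => T x (s%:Z - K%:Z))
   (fun s => @E R (s%:Z - K%:Z)) M _ _ _ _) _.
- by move=> s; exact: l2_E.
- by move=> s x y hx hy; rewrite a1.
- by move=> s c x hx; rewrite s1.
- by move=> s x hx; apply: le_trans (cabs2_le_nrm2 _ (l1 _ hx)) _; exact: hM.
by move=> x _; rewrite /ocomp window_proj_vsum.
Qed.

Lemma Kcal_comp_window_proj K T : bounded T -> Kcal (ocomp T (window_proj K)).
Proof.
move=> hT; move: (hT) => [l1 a1 s1 _].
apply: Kcal_opeq (@Kcal_finite_rank (K.*2) (fun s x => x (s%:Z - K%:Z))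
   (fun s => T (@E R (s%:Z - K%:Z))) 1 _ _ _ _) _ => //.
- by move=> s; apply: l1; exact: l2_E.
- by move=> s x hx; rewrite mul1r; exact: cabs2_le_nrm2.
move=> x hx; rewrite /ocomp window_proj_vsum bounded_vsum //; last first.
  by move=> s; apply: l2_scale; exact: l2_E.
by apply/funext => k; rewrite /vsum; apply: eq_bigr => s _; rewrite s1 //; exact: l2_E.
Qed.

(* For |t| <= B, coordinate t + j of T E_j - T E_j' is v t, as the translate
   of v by j' vanishes there; so T E_(js n) has no Cauchy subsequence unless
   v t = 0. *)
Lemma Kcal_translates_eq0 T (v : int -> R[i]) (B : nat) (js : nat -> int) :
  Kcal T ->
  (forall s, B%:Z < `|s| -> v s = 0) ->
  (forall n n', (n < n')%N -> 2 * B%:Z < `|js n' - js n|) ->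
  (forall n, T (@E R (js n)) = fun k => v (k - js n)) ->
  forall t, v t = 0.
Proof.
move=> [[l1 _ _ _] hc] hv hjs hT t.
have [ht|/hv//] := leP `|t| B%:Z.
suff small : forall e : R, 0 < e -> cabs2 (v t) < e.
  apply: cabs2_eq0; apply/eqP; rewrite eq_le cabs2_ge0 andbT leNgt; apply/negP => hp.
  by have := small _ hp; rewrite ltxx.
move=> e e0.
have [phi [iphi hphi]] := hc (fun n => @E R (js n)) (fun n => conj (l2_E _) (nrm2_E _)).
have [N hN] := hphi e e0; have := hN N N.+1 (leqnn _) (leqnSn _).
have := cabs2_le_nrm2 (t + js (phi N))
  (l2_sub (l1 _ (l2_E (js (phi N)))) (l1 _ (l2_E (js (phi N.+1))))).
have := hjs _ _ (iphi N); rewrite !hT /vsub addrK => hsep.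
rewrite (hv (t + js (phi N) - js (phi N.+1))) ?subr0; last by lia.
exact: le_lt_trans.
Qed.

(** * The algebra calA *)

Definition shift_sum m (ns : 'I_m -> int) (an : 'I_m -> int -> R[i]) : op R :=
  fun x k => \sum_(i < m) an i (k - ns i) * x (k - ns i).

(* The coefficient of U^t in the Laurent polynomial sum_i c_i U^(ns i). *)
Definition shift_coef m (ns : 'I_m -> int) (c : 'I_m -> R[i]) (t : int) : R[i] :=
  \sum_(i < m) (if ns i == t then c i else 0).

Lemma Aalg_add T1 T2 : Aalg T1 -> Aalg T2 -> Aalg (oadd T1 T2).
Proof.
move=> [m1 [ns1 [an1 [h1 e1]]]] [m2 [ns2 [an2 [h2 e2]]]].
pose pick (X : Type) (f1 : 'I_m1 -> X) (f2 : 'I_m2 -> X) i :=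
  match fintype.split i with inl j => f1 j | inr j => f2 j end.
exists (m1 + m2)%N, (pick _ ns1 ns2), (pick _ an1 an2); split.
  by move=> i; rewrite /pick; case: (fintype.split i).
move=> x hx; rewrite /oadd e1 // e2 //; apply/funext => k.
rewrite /vadd big_split_ord /=; congr (_ + _); apply: eq_bigr => i _.
  by rewrite /pick (unsplitK (inl i)).
by rewrite /pick (unsplitK (inr i)).
Qed.

Lemma Aalg_scale c T : Aalg T -> Aalg (oscale c T).
Proof.
move=> [m [ns [an [h e]]]]; exists m, ns, (fun i j => c * an i j); split.
  move=> i; have [k0 hk0] := h i; exists k0 => k.
  by have [h1 h2] := hk0 k; split => hk; [rewrite h1|rewrite h2].
move=> x hx; rewrite /oscale e //; apply/funext => k.
by rewrite /vscale mulr_sumr; apply: eq_bigr => i _; rewrite mulrA.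
Qed.

Lemma Aalg_window_proj K : Aalg (window_proj K).
Proof.
exists 1%N, (fun _ => 0), (fun _ => window_ind K); split.
  by move=> _; exists (K%:Z + 1) => k; rewrite /window_ind; split => hk;
    case: ifP; case: ifP => //; lia.
by move=> x _; apply/funext => k; rewrite big_ord1 subr0.
Qed.

Lemma Aalg_window_proj_comp K T : Aalg T -> Aalg (ocomp (window_proj K) T).
Proof.
move=> [m [ns [an [h e]]]].
exists m, ns, (fun i j => window_ind K (j + ns i) * an i j); split.
  move=> i; exists ((K + 1)%N%:Z + (absz (ns i))%:Z) => k; rewrite /window_ind.
  by split => hk; case: ifP; case: ifP; rewrite ?mul0r //; lia.
move=> x hx; rewrite /ocomp e //; apply/funext => k.
by rewrite /window_proj /multK mulr_sumr; apply: eq_bigr => i _; rewrite subrK mulrA.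
Qed.

Lemma Aalg_tails m (ns : 'I_m -> int) (an : 'I_m -> int -> R[i]) :
  (forall i, ev_const (an i)) ->
  exists (B : nat) (cp cm : 'I_m -> R[i]), [/\ forall i, `|ns i| <= B%:Z,
    forall i j, B%:Z <= j -> an i j = cp i &
    forall i j, j <= - B%:Z -> an i j = cm i].
Proof.
move=> /choice [k0 hk0].
exists (\sum_(i < m) (absz (k0 i) + absz (ns i)))%N.
exists (fun i => an i (k0 i)), (fun i => an i (- k0 i)).
set B := (\sum_(i < m) _)%N.
have leB i : (absz (k0 i) + absz (ns i) <= B)%N by rewrite /B (bigD1 i) //= leq_addr.
split=> [i|i j hj|i j hj]; have := leB i; first lia.
  by move=> hi; apply: (hk0 i j).1; lia.
by move=> hi; apply: (hk0 i j).2; lia.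
Qed.

Section ShiftSum.
Variables (m : nat) (ns : 'I_m -> int).
Implicit Types (an : 'I_m -> int -> R[i]) (c : 'I_m -> R[i]).

Lemma sum_shift_coef c (f : int -> R[i]) :
  \sum_(i < m) f (ns i) * c i =
  \sum_(t <- undup [seq ns i | i <- enum 'I_m]) f t * shift_coef ns c t.
Proof.
set r := undup _; have ur : uniq r := undup_uniq _.
have spread i : f (ns i) * c i = \sum_(t <- r) (if ns i == t then f t * c i else 0).
  have inr : ns i \in r by rewrite mem_undup map_f // mem_enum.
  rewrite (bigD1_seq (ns i) inr ur) /= eqxx big1_seq ?addr0 // => t /andP [ht _].
  by rewrite eq_sym (negbTE ht).
rewrite (eq_bigr _ (fun i _ => spread i)).
rewrite exchange_big /=; apply: eq_bigr => t _; rewrite /shift_coef mulr_sumr.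
by apply: eq_bigr => i _; case: eqP; rewrite ?mulr0.
Qed.

Lemma shift_coef_out c (B : nat) t :
  (forall i, `|ns i| <= B%:Z) -> B%:Z < `|t| -> shift_coef ns c t = 0.
Proof.
move=> nsB ht; rewrite /shift_coef big1 // => i _.
by case: eqP => // e; have := nsB i; lia.
Qed.

Lemma shift_sum_E an c j : (forall i, an i j = c i) ->
  shift_sum ns an (@E R j) = fun k => shift_coef ns c (k - j).
Proof.
move=> hj; apply/funext => k; rewrite /shift_sum /shift_coef; apply: eq_bigr => i _.
rewrite /E (_ : (k - ns i == j) = (ns i == k - j)); last by apply/eqP/eqP; lia.
case: eqP => [->|_]; last by rewrite mulr0.
by rewrite (_ : k - (k - j) = j) ?mulr1 //; lia.
Qed.

Lemma shift_sumD an x y :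
  shift_sum ns an (vadd x y) = vadd (shift_sum ns an x) (shift_sum ns an y).
Proof.
by apply/funext => k; rewrite /shift_sum /vadd -big_split; apply: eq_bigr => i _; rewrite mulrDr.
Qed.

Lemma shift_sum_tail_eq0 an c x k :
  (forall t, shift_coef ns c t = 0) ->
  (forall i, an i (k - ns i) = c i \/ x (k - ns i) = 0) ->
  shift_sum ns an x k = 0.
Proof.
move=> c0 hk; rewrite /shift_sum (eq_bigr (fun i => x (k - ns i) * c i)).
  by rewrite (sum_shift_coef _ (fun t => x (k - t))) big1 // => t _; rewrite c0 mulr0.
by move=> i _; case: (hk i) => ->; rewrite ?mulr0 ?mul0r // mulrC.
Qed.

Section ShiftSumWindow.
Variables (an : 'I_m -> int -> R[i]) (cp cm : 'I_m -> R[i]) (B : nat).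
Hypothesis nsB : forall i, `|ns i| <= B%:Z.
Hypothesis an_cp : forall i j, B%:Z <= j -> an i j = cp i.
Hypothesis an_cm : forall i j, j <= - B%:Z -> an i j = cm i.
Hypothesis cp0 : forall t, shift_coef ns cp t = 0.
Hypothesis cm0 : forall t, shift_coef ns cm t = 0.

Lemma window_proj_shift_sum x :
  window_proj (2 * B) (shift_sum ns an x) = shift_sum ns an x.
Proof.
apply/funext => k; rewrite /window_proj /multK /window_ind.
case: ifP => hk; first by rewrite mul1r.
rewrite mul0r; apply/esym; have [hk'|hk'] := leP (2 * B)%N%:Z k.
  by apply: (shift_sum_tail_eq0 cp0) => i; left; apply: an_cp; have := nsB i; lia.
by apply: (shift_sum_tail_eq0 cm0) => i; left; apply: an_cm; have := nsB i; lia.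
Qed.

Lemma shift_sum_window_proj x :
  shift_sum ns an (window_proj (2 * B) x) = shift_sum ns an x.
Proof.
pose xp : vec R := fun j => if (2 * B)%N%:Z <= j then x j else 0.
pose xm : vec R := fun j => if j < - (2 * B)%N%:Z then x j else 0.
have xp0 k : shift_sum ns an xp k = 0.
  apply: (shift_sum_tail_eq0 cp0) => i; rewrite /xp; case: ifP => hi; last by right.
  by left; apply: an_cp; have := nsB i; lia.
have xm0 k : shift_sum ns an xm k = 0.
  apply: (shift_sum_tail_eq0 cm0) => i; rewrite /xm; case: ifP => hi; last by right.
  by left; apply: an_cm; have := nsB i; lia.
have x_split : x = vadd (vadd (window_proj (2 * B) x) xp) xm.
  apply/funext => j; rewrite /vadd /xp /xm /window_proj /multK /window_ind.
  by case: ifP; case: ifP; case: ifP; rewrite ?mul1r ?mul0r ?addr0 ?add0r //; lia.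
apply/funext => k.
by rewrite [in RHS]x_split !shift_sumD /vadd xp0 xm0 !addr0.
Qed.

End ShiftSumWindow.

End ShiftSum.

Lemma Kcal_shift_coef_eq0 a m (ns : 'I_m -> int) (an : 'I_m -> int -> R[i])
    (c : 'I_m -> R[i]) (B : nat) (js : nat -> int) :
  opeq a (shift_sum ns an) -> Kcal a -> (forall i, `|ns i| <= B%:Z) ->
  (forall n n', (n < n')%N -> 2 * B%:Z < `|js n' - js n|) ->
  (forall n i, an i (js n) = c i) ->
  forall t, shift_coef ns c t = 0.
Proof.
move=> a_eq aK nsB sep hjs; apply: (Kcal_translates_eq0 aK _ sep) => [s|n].
  exact: shift_coef_out.
by rewrite a_eq; [exact: shift_sum_E (hjs n) | exact: l2_E].
Qed.

Lemma Kcal_Aalg_window a : Aalg a -> Kcal a ->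
  exists K, opeq a (ocomp (window_proj K) a) /\ opeq a (ocomp a (window_proj K)).
Proof.
move=> [m [ns [an [ev a_eq]]]] aK; change (opeq a (shift_sum ns an)) in a_eq.
have [B [cp [cm [nsB an_cp an_cm]]]] := Aalg_tails ns ev.
pose js n : int := B%:Z + (n * (2 * B + 1))%N%:Z.
have cp0 : forall t, shift_coef ns cp t = 0.
  apply: (Kcal_shift_coef_eq0 (js := js) a_eq aK nsB) => [n n' lt_nn'|n i].
    by rewrite /js; nia.
  by apply: an_cp; rewrite /js; lia.
have cm0 : forall t, shift_coef ns cm t = 0.
  apply: (Kcal_shift_coef_eq0 (js := fun n => - js n) a_eq aK nsB) => [n n' lt_nn'|n i].
    by rewrite /js; nia.
  by apply: an_cm; rewrite /js; lia.
have [l2P _ _ _] := bounded_window_proj (2 * B).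
exists (2 * B)%N; split => x hx; rewrite /ocomp a_eq //.
  by rewrite (window_proj_shift_sum nsB an_cp an_cm cp0 cm0).
rewrite a_eq; last exact: l2P.
by rewrite (shift_sum_window_proj nsB an_cp an_cm cp0 cm0).
Qed.

(** * Derivations *)

Lemma derivation_Kcal (d : op R -> op R) a :
  derivation d -> Aalg a -> Kcal a -> Kcal (d a).
Proof.
move=> [dA d_opeq _ _ d_leibniz] ha aK.
have [K [aPa aaP]] := Kcal_Aalg_window ha aK.
have hP := Aalg_window_proj K.
have d_bounded T : Aalg T -> bounded (d T) := fun hT => Acal_bounded (dA _ hT).
have PdaK : Kcal (ocomp (window_proj K) (d a)).
  exact: Kcal_window_proj_comp (d_bounded _ ha).
have dPaK : Kcal (ocomp (d (window_proj K)) a).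
  apply: Kcal_opeq (Kcal_comp_window_proj K (bounded_comp (d_bounded _ hP) aK.1)) _.
  by move=> x hx; rewrite /ocomp (aaP x hx).
apply: Kcal_opeq (Kcal_add PdaK dPaK) _ => x hx.
by rewrite (d_opeq _ _ ha (Aalg_window_proj_comp K ha) aPa x hx) (d_leibniz _ _ hP ha x hx).
Qed.

Lemma derivation_Kcal_sub (d : op R -> op R) a b : derivation d ->
  Aalg a -> Aalg b -> Kcal (osub a b) -> Kcal (osub (d a) (d b)).
Proof.
move=> hd ha hb abK; have [_ _ d_add d_scale _] := hd.
have hb' := Aalg_scale (-1) hb.
have eq_sub (S T : op R) : opeq (oadd S (oscale (-1) T)) (osub S T).
  by move=> x _; apply/funext => k; rewrite /osub /oadd /vsub /vadd /oscale /vscale mulN1r.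
have abK' : Kcal (oadd a (oscale (-1) b)).
  by apply: Kcal_opeq abK _ => x hx; rewrite -eq_sub.
apply: Kcal_opeq (derivation_Kcal hd (Aalg_add ha hb') abK') _ => x hx.
by rewrite (d_add _ _ ha hb' x hx) -eq_sub // /oadd (d_scale (-1) b hb x hx).
Qed.

End ShiftAlgebra.

Theorem mainTheorem8 (R : realType) (d : op R -> op R) :
  derivation d ->
  (forall a : op R, Aalg a -> Kcal a -> Kcal (d a)) /\
  (forall a b : op R, Aalg a -> Aalg b -> Kcal (osub a b) ->
     Kcal (osub (d a) (d b))).
Proof.
move=> hd; split=> [a|a b]; [exact: derivation_Kcal | exact: derivation_Kcal_sub].
Qed.
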